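(* Let $n\ge1$ and let $\mathcal{S}(\vec u,\vec v,\vec a,\vec d)$ be the lexicographic-order specification over $n$ variables defined below, with order constraint $\mathcal{O}(\vec d)=\{d_n\ge1\}$. Then there is a cutting planes derivation of size $O(n)$ of $f_n\ge1$ from $\mathcal{S}(\vec x,\vec y,\vec a,\vec d)\cup\{d_n\ge1\}\cup\mathcal{S}(\vec y,\vec z,\vec b,\vec e)\cup\{e_n\ge1\}\cup\mathcal{S}(\vec x,\vec z,\vec c,\vec f)$, where $\vec x,\vec y,\vec z$ are disjoint lists of $n$ variables and $(\vec a,\vec d),(\vec b,\vec e),(\vec c,\vec f)$ are disjoint lists of fresh auxiliary variables. That is, transitivity of the order can be proved by a cutting planes derivation of size $O(n)$.
   Context: Literals are $x$ or $\bar x=1-x$; a PB constraint is $\sum_i c_i\ell_i\ge A$. The specification $\mathcal{S}(\vec u,\vec v,\vec a,\vec d)$ (variables $u_1..u_n$, $v_1..v_n$, $a_1..a_{n-1}$, $d_1..d_n$) consists of: $\bar a_1+u_1+\bar v_1\ge1$; $2a_1+\bar u_1+v_1\ge2$; for $1\le i\le n-2$: $3\bar a_{i+1}+2a_i+u_{i+1}+\bar v_{i+1}\ge3$ and $2a_{i+1}+2\bar a_i+\bar u_{i+1}+v_{i+1}\ge2$; $\bar d_1+v_1+\bar u_1\ge1$; $2d_1+\bar v_1+u_1\ge2$; for $1\le i\le n-1$: $4\bar d_{i+1}+3d_i+\bar a_i+v_{i+1}+\bar u_{i+1}\ge4$ and $4d_{i+1}+3\bar d_i+a_i+\bar v_{i+1}+u_{i+1}\ge3$.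 $\mathcal{S}(\vec x,\vec y,\vec a,\vec d)$ denotes substitution of $\vec x,\vec y$ (and the given auxiliary lists) for $\vec u,\vec v$ (and $\vec a,\vec d$). Cutting planes derivation: a sequence of constraints, each a premise, a literal axiom $\ell\ge0$, or obtained from earlier ones by addition, multiplication by a positive integer, division by a positive integer with rounding up of coefficients and degree, or saturation ($\sum c_i\ell_i\ge A\mapsto\sum\min(c_i,A)\ell_i\ge A$), with weakening (adding literal axioms to eliminate a term) as derived rule. The size of a derivation is the total size of the constraints in it. *)

From Stdlib Require Import ZArith List.
Import ListNotations.
Open Scope Z_scope.

(* Variables: (tag, index). Tags: 0=x 1=y 2=z 3=a 4=b 5=c 6=d 7=e 8=f. *)
Definition var := (nat * nat)%type.
Definition var_eq_dec : forall v w : var, {v = w} + {v <> w}.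
Proof. decide equality; apply Nat.eq_dec. Defined.

(* A PB constraint  sum_i c_i l_i >= A  (c_i >= 0) is represented as a list of
   (variable, signed coefficient) terms and the degree A: a term (v, c) with
   c > 0 stands for c*v, with c < 0 for |c|*(1-v) (i.e. |c| times the negative
   literal). Repeated variables in the list are summed. *)
Record pbc := PBC { terms : list (var * Z); degree : Z }.

Definition coef (C : pbc) (v : var) : Z :=
  fold_right (fun t acc => if var_eq_dec (fst t) v then snd t + acc else acc)
    0 (terms C).

Definition support (C : pbc) : list var := map fst (terms C).

Definition ceq (C D : pbc) : Prop :=
  (forall v, coef C v = coef D v) /\ degree C = degree D.

Definition lit := (var * bool)%type.  (* (v, true) = v, (v, false) = 1 - v *)
Definition term_of (t : Z * lit) : var * Z :=
  let '(c, (v, b)) := t in (v, if b then c else - c).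
Definition mk (ts : list (Z * lit)) (A : Z) : pbc := PBC (map term_of ts) A.
Definition pos (v : var) : lit := (v, true).
Definition neg (v : var) : lit := (v, false).

Definition ceil_div (a k : Z) : Z := - ((- a) / k).

(* amount by which the degree drops when adding coefficients a and b of the
   same variable: min(|a|,|b|) if the signs are opposite (l + ~l = 1), else 0 *)
Definition cancel (a b : Z) : Z := (Z.abs a + Z.abs b - Z.abs (a + b)) / 2.

Definition is_lit_axiom (C : pbc) : Prop :=
  exists l : lit, ceq C (mk [(1, l)] 0).

Definition is_add (C1 C2 C : pbc) : Prop :=
  (forall v, coef C v = coef C1 v + coef C2 v) /\
  degree C = degree C1 + degree C2 -
    fold_right (fun v acc => cancel (coef C1 v) (coef C2 v) + acc) 0
      (nodup var_eq_dec (support C1 ++ support C2)).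

Definition is_mult (k : Z) (C1 C : pbc) : Prop :=
  0 < k /\ (forall v, coef C v = k * coef C1 v) /\ degree C = k * degree C1.

Definition is_div (k : Z) (C1 C : pbc) : Prop :=
  0 < k /\
  (forall v, coef C v = Z.sgn (coef C1 v) * ceil_div (Z.abs (coef C1 v)) k) /\
  degree C = ceil_div (degree C1) k.

Definition is_sat (C1 C : pbc) : Prop :=
  0 <= degree C1 /\
  (forall v, coef C v = Z.sgn (coef C1 v) * Z.min (Z.abs (coef C1 v)) (degree C1)) /\
  degree C = degree C1.

Definition cp_step (prem prev : list pbc) (C : pbc) : Prop :=
  (exists P, In P prem /\ ceq C P) \/
  is_lit_axiom C \/
  (exists C1 C2, In C1 prev /\ In C2 prev /\ is_add C1 C2 C) \/
  (exists k C1, In C1 prev /\ is_mult k C1 C) \/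
  (exists k C1, In C1 prev /\ is_div k C1 C) \/
  (exists C1, In C1 prev /\ is_sat C1 C).

Fixpoint cp_valid (prem prev rest : list pbc) : Prop :=
  match rest with
  | [] => True
  | C :: r => cp_step prem prev C /\ cp_valid prem (prev ++ [C]) r
  end.

Definition cp_derivation (prem : list pbc) (goal : pbc) (D : list pbc) : Prop :=
  cp_valid prem [] D /\ exists D' C, D = D' ++ [C] /\ ceq C goal.

Definition zsize (z : Z) : Z := 1 + Z.log2 (Z.abs z + 1).
Definition pbc_size (C : pbc) : Z :=
  fold_right (fun t acc => 1 + zsize (snd t) + acc) 0 (terms C) + zsize (degree C).
Definition deriv_size (D : list pbc) : Z :=
  fold_right (fun C acc => pbc_size C + acc) 0 D.

Definition spec (n : nat) (u v a d : nat -> var) : list pbc :=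
  [ mk [(1, neg (a 1%nat)); (1, pos (u 1%nat)); (1, neg (v 1%nat))] 1;
    mk [(2, pos (a 1%nat)); (1, neg (u 1%nat)); (1, pos (v 1%nat))] 2 ] ++
  flat_map (fun i =>
    [ mk [(3, neg (a (i+1)%nat)); (2, pos (a i)); (1, pos (u (i+1)%nat));
          (1, neg (v (i+1)%nat))] 3;
      mk [(2, pos (a (i+1)%nat)); (2, neg (a i)); (1, neg (u (i+1)%nat));
          (1, pos (v (i+1)%nat))] 2 ])
    (seq 1 (n - 2)) ++
  [ mk [(1, neg (d 1%nat)); (1, pos (v 1%nat)); (1, neg (u 1%nat))] 1;
    mk [(2, pos (d 1%nat)); (1, neg (v 1%nat)); (1, pos (u 1%nat))] 2 ] ++
  flat_map (fun i =>
    [ mk [(4, neg (d (i+1)%nat)); (3, pos (d i)); (1, neg (a i));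
          (1, pos (v (i+1)%nat)); (1, neg (u (i+1)%nat))] 4;
      mk [(4, pos (d (i+1)%nat)); (3, neg (d i)); (1, pos (a i));
          (1, neg (v (i+1)%nat)); (1, pos (u (i+1)%nat))] 3 ])
    (seq 1 (n - 1)).

Definition vX (i : nat) : var := (0%nat, i).
Definition vY (i : nat) : var := (1%nat, i).
Definition vZ (i : nat) : var := (2%nat, i).
Definition vA (i : nat) : var := (3%nat, i).
Definition vB (i : nat) : var := (4%nat, i).
Definition vC (i : nat) : var := (5%nat, i).
Definition vD (i : nat) : var := (6%nat, i).
Definition vE (i : nat) : var := (7%nat, i).
Definition vF (i : nat) : var := (8%nat, i).

Definition transitivity_premises (n : nat) : list pbc :=
  spec n vX vY vA vD ++ [mk [(1, pos (vD n))] 1] ++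
  spec n vY vZ vB vE ++ [mk [(1, pos (vE n))] 1] ++
  spec n vX vZ vC vF.

Definition transitivity_goal (n : nat) : pbc := mk [(1, pos (vF n))] 1.

(* In S(u,v,a,d) the variable a_i holds iff u_j >= v_j for all j <= i, and d_i holds
   iff u_1..u_i <= v_1..v_i lexicographically.  Transitivity is proved by induction on
   the prefix length i, maintaining three clauses: d_i /\ e_i -> f_i, and, under
   c_i /\ d_i /\ e_i (when the three prefixes coincide), a_i and b_i.  The clauses at
   i+1 follow from those at i by a constant number of resolution steps (an addition
   followed by a saturation) on clauses obtained from the specification by weakening.
   These constant-size derivations are checked by computation at i = 1 and carried to
   every i by shifting variable indices, which preserves cutting planes derivations and
   their size; at i = n the unit premises d_n and e_n then yield f_n. *)

From Stdlib Require Import ZArith List Lia Bool.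
Import ListNotations.
Open Scope Z_scope.

Lemma coef_notin C v : ~ In v (support C) -> coef C v = 0.
Proof.
  destruct C as [ts k]; unfold coef, support; cbn.
  induction ts as [|[w c] ts IH]; cbn; intros Hv; [reflexivity|].
  destruct (var_eq_dec w v); [tauto|]. apply IH; tauto.
Qed.

Lemma coef_ext_support C D :
  (forall v, In v (support C ++ support D) -> coef C v = coef D v) ->
  forall v, coef C v = coef D v.
Proof.
  intros H v. destruct (in_dec var_eq_dec v (support C ++ support D)) as [Hv|Hv]; auto.
  rewrite in_app_iff in Hv. rewrite !coef_notin; tauto.
Qed.

Lemma ceq_refl C : ceq C C.
Proof. split; reflexivity. Qed.

Lemma ceq_sym C D : ceq C D -> ceq D C.
Proof. intros [Hc Hd]; split; auto. Qed.

Lemma ceq_trans C D E : ceq C D -> ceq D E -> ceq C E.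
Proof. intros [Hc Hd] [Hc' Hd']; split; [intros v; rewrite Hc|]; congruence. Qed.

Definition ceqb (C D : pbc) : bool :=
  forallb (fun v => coef C v =? coef D v) (support C ++ support D) && (degree C =? degree D).

Lemma ceqb_sound C D : ceqb C D = true -> ceq C D.
Proof.
  unfold ceqb; rewrite andb_true_iff, forallb_forall, Z.eqb_eq; intros [Hc Hd].
  split; [apply coef_ext_support; intros v Hv; apply Z.eqb_eq, Hc, Hv | exact Hd].
Qed.

(** * Cutting planes proofs as trees *)

Definition tabulate (f : var -> Z) (vs : list var) : list (var * Z) :=
  map (fun v => (v, f v)) (nodup var_eq_dec vs).

Lemma coef_tabulate f vs k v :
  (forall w, ~ In w vs -> f w = 0) -> coef (PBC (tabulate f vs) k) v = f v.
Proof.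
  intros Hf. unfold coef, tabulate; cbn [terms].
  assert (Hl : forall l, NoDup l -> fold_right
      (fun t acc => if var_eq_dec (fst t) v then snd t + acc else acc) 0
      (map (fun w => (w, f w)) l) = if in_dec var_eq_dec v l then f v else 0).
  { induction l as [|w l IH]; intros Hnd; cbn [map fold_right fst snd in_dec]; [reflexivity|].
    inversion_clear Hnd as [|? ? Hw Hnd'].
    rewrite (IH Hnd'). destruct (var_eq_dec w v) as [<-|Hwv].
    - destruct (in_dec var_eq_dec w l); [contradiction|].
      destruct (in_dec var_eq_dec w (w :: l)) as [_|Hn]; [ring | destruct Hn; left; reflexivity].
    - destruct (in_dec var_eq_dec v l), (in_dec var_eq_dec v (w :: l)) as [Hv|Hv];
        cbn [In] in Hv; [reflexivity | tauto | tauto | reflexivity]. }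
  rewrite (Hl _ (NoDup_nodup _ _)).
  destruct (in_dec var_eq_dec v (nodup var_eq_dec vs)) as [|Hv]; [reflexivity|].
  rewrite nodup_In in Hv. symmetry; auto.
Qed.

Definition cancellation (C1 C2 : pbc) : Z :=
  fold_right (fun v acc => cancel (coef C1 v) (coef C2 v) + acc) 0
    (nodup var_eq_dec (support C1 ++ support C2)).

Definition pb_add (C1 C2 : pbc) : pbc :=
  PBC (tabulate (fun v => coef C1 v + coef C2 v) (support C1 ++ support C2))
    (degree C1 + degree C2 - cancellation C1 C2).

Definition pb_mul (k : Z) (C : pbc) : pbc :=
  PBC (tabulate (fun v => k * coef C v) (support C)) (k * degree C).

Definition pb_sat (C : pbc) : pbc :=
  PBC (tabulate (fun v => Z.sgn (coef C v) * Z.min (Z.abs (coef C v)) (degree C)) (support C))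
    (degree C).

Definition lit_axiom (l : lit) : pbc := mk [(1, l)] 0.

Lemma is_add_pb_add C1 C2 : is_add C1 C2 (pb_add C1 C2).
Proof.
  split; [|reflexivity]. intros v; apply coef_tabulate.
  intros w Hw; rewrite in_app_iff in Hw; rewrite !coef_notin; tauto.
Qed.

Lemma is_mult_pb_mul k C : 0 < k -> is_mult k C (pb_mul k C).
Proof.
  repeat split; auto. intros v; apply coef_tabulate.
  intros w Hw; rewrite coef_notin; auto; ring.
Qed.

Lemma is_sat_pb_sat C : 0 <= degree C -> is_sat C (pb_sat C).
Proof.
  repeat split; auto. intros v; apply coef_tabulate.
  intros w Hw; rewrite coef_notin; auto.
Qed.

Lemma cp_valid_app prem prev D1 D2 :
  cp_valid prem prev D1 -> cp_valid prem (prev ++ D1) D2 ->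
  cp_valid prem prev (D1 ++ D2).
Proof.
  revert prev; induction D1 as [|C D1 IH]; cbn; intros prev H1 H2.
  - rewrite app_nil_r in H2; exact H2.
  - destruct H1 as [Hs H1]; split; [exact Hs|]. apply IH; [exact H1|].
    rewrite <- app_assoc; exact H2.
Qed.

Lemma cp_valid_snoc prem prev D C :
  cp_valid prem prev D -> cp_step prem (prev ++ D) C -> cp_valid prem prev (D ++ [C]).
Proof. intros HD HC; apply cp_valid_app; [exact HD | split; [exact HC | exact I]]. Qed.

Inductive cp_proof : Type :=
  | Hyp (C : pbc)
  | LitAx (l : lit)
  | Add (p q : cp_proof)
  | Mul (k : Z) (p : cp_proof)
  | Sat (p : cp_proof).

Fixpoint conclusion (p : cp_proof) : pbc :=
  match p with
  | Hyp C => C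
  | LitAx l => lit_axiom l
  | Add p q => pb_add (conclusion p) (conclusion q)
  | Mul k p => pb_mul k (conclusion p)
  | Sat p => pb_sat (conclusion p)
  end.

Fixpoint linearize (p : cp_proof) : list pbc :=
  match p with
  | Hyp _ | LitAx _ => [conclusion p]
  | Add q r => linearize q ++ linearize r ++ [conclusion p]
  | Mul _ q | Sat q => linearize q ++ [conclusion p]
  end.

Fixpoint checks (hyps : list pbc) (p : cp_proof) : bool :=
  match p with
  | Hyp C => existsb (ceqb C) hyps
  | LitAx _ => true
  | Add p q => checks hyps p && checks hyps q
  | Mul k p => (0 <? k) && checks hyps p
  | Sat p => (0 <=? degree (conclusion p)) && checks hyps p
  end.

Definition proves (hyps : list pbc) (p : cp_proof) (C : pbc) : bool :=
  checks hyps p && ceqb (conclusion p) C.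

Lemma linearize_last p : exists D, linearize p = D ++ [conclusion p].
Proof.
  destruct p; cbn [linearize];
    [exists [] | exists [] | exists (linearize p1 ++ linearize p2) | eexists | eexists];
    rewrite ?app_assoc; reflexivity.
Qed.

Lemma conclusion_in_linearize p : In (conclusion p) (linearize p).
Proof.
  destruct (linearize_last p) as [D ->]. apply in_or_app; right; left; reflexivity.
Qed.

Lemma linearize_valid hyps p :
  checks hyps p = true -> forall prev, cp_valid hyps prev (linearize p).
Proof.
  induction p as [C|l|p IHp q IHq|k p IHp|p IHp]; cbn [checks linearize]; intros Hp prev.
  - split; [|exact I]. left.
    apply existsb_exists in Hp as [H [HH HC]]. exists H; split; [exact HH | apply ceqb_sound, HC].
  - split; [|exact I]. right; left. exists l; apply ceq_refl.
  - apply andb_true_iff in Hp as [Hp Hq].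
    apply cp_valid_app; [apply IHp, Hp|]. apply cp_valid_snoc; [apply IHq, Hq|].
    do 2 right; left. exists (conclusion p), (conclusion q); repeat split.
    + rewrite <- app_assoc; apply in_or_app; right; apply in_or_app; left.
      apply conclusion_in_linearize.
    + apply in_or_app; right; apply conclusion_in_linearize.
    + apply is_add_pb_add.
  - apply andb_true_iff in Hp as [Hk Hp]; apply Z.ltb_lt in Hk.
    apply cp_valid_snoc; [apply IHp, Hp|].
    do 3 right; left. exists k, (conclusion p); split.
    + apply in_or_app; right; apply conclusion_in_linearize.
    + apply is_mult_pb_mul, Hk.
  - apply andb_true_iff in Hp as [Hd Hp]; apply Z.leb_le in Hd.
    apply cp_valid_snoc; [apply IHp, Hp|].
    do 5 right. exists (conclusion p); split.
    + apply in_or_app; right; apply conclusion_in_linearize.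
    + apply is_sat_pb_sat, Hd.
Qed.

Definition derives (hyps D : list pbc) (C : pbc) : Prop :=
  cp_valid hyps [] D /\ exists Q, In Q D /\ ceq C Q.

Lemma proves_conclusion hyps p C : proves hyps p C = true -> ceq (conclusion p) C.
Proof. unfold proves; rewrite andb_true_iff; intros [_ HC]; apply ceqb_sound, HC. Qed.

Lemma proves_derives hyps p C : proves hyps p C = true -> derives hyps (linearize p) C.
Proof.
  intros Hp. split.
  - unfold proves in Hp; apply andb_true_iff in Hp as [Hp _]; apply linearize_valid, Hp.
  - exists (conclusion p); split; [apply conclusion_in_linearize|].
    apply ceq_sym, (proves_conclusion hyps), Hp.
Qed.

(** * Discharging hypotheses *)

Definition available (prem prev : list pbc) (C : pbc) : Prop :=
  exists Q, In Q (prem ++ prev) /\ ceq C Q.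

Lemma available_of_In prem prev C : In C (prem ++ prev) -> available prem prev C.
Proof. intros H; exists C; split; [exact H | apply ceq_refl]. Qed.

Lemma cp_valid_cut hyps prem prev P D :
  (forall H, In H hyps -> available prem prev H) ->
  cp_valid hyps P D -> cp_valid prem (prev ++ P) D.
Proof.
  intros Hhyps; revert P; induction D as [|C D IH]; cbn; [trivial|]. intros P [HC HD].
  split; [|rewrite <- app_assoc; apply IH, HD].
  assert (Hprev : forall Q, In Q P -> In Q (prev ++ P)) by (intros; apply in_or_app; auto).
  destruct HC as [[H [HH HCH]] | [HC | [[C1 [C2 [H1 [H2 HC]]]] |
    [[k [C1 [H1 HC]]] | [[k [C1 [H1 HC]]] | [C1 [H1 HC]]]]]]].
  - destruct (Hhyps H HH) as [Q [HQ HHQ]]. pose proof (ceq_trans _ _ _ HCH HHQ) as [Hc Hd].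
    apply in_app_or in HQ as [HQ|HQ].
    + left; exists Q; split; [exact HQ | split; assumption].
    + (* a hypothesis derived earlier is re-derived as 1 times itself *)
      do 3 right; left. exists 1, Q. split; [apply in_or_app; left; exact HQ|].
      split; [lia | split; [intros v; rewrite Hc; ring | lia]].
  - right; left; exact HC.
  - do 2 right; left; exists C1, C2; auto.
  - do 3 right; left; exists k, C1; auto.
  - do 4 right; left; exists k, C1; auto.
  - do 5 right; exists C1; auto.
Qed.

Lemma derives_cut hyps prem prev D C :
  (forall H, In H hyps -> available prem prev H) -> derives hyps D C ->
  cp_valid prem prev D /\ available prem (prev ++ D) C.
Proof.
  intros Hhyps [HD [Q [HQ HC]]]. split.
  - rewrite <- (app_nil_r prev). exact (cp_valid_cut _ _ _ _ _ Hhyps HD).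
  - exists Q; split; [|exact HC]. rewrite app_assoc; apply in_or_app; right; exact HQ.
Qed.

Lemma available_incl prem P P' C :
  incl P P' -> available prem P C -> available prem P' C.
Proof.
  intros HP [Q [HQ HC]]; exists Q; split; [|exact HC].
  apply in_app_or in HQ as [HQ|HQ]; apply in_or_app; [left | right; apply HP]; exact HQ.
Qed.

(** * Renaming variables *)

Section Renaming.

Variable rho : var -> var.
Variable rho_inv : var -> option var.
Hypothesis rho_invP : forall v w, rho_inv w = Some v <-> rho v = w.

Definition rename (C : pbc) : pbc :=
  PBC (map (fun t => (rho (fst t), snd t)) (terms C)) (degree C).

Lemma rho_inj v v' : rho v = rho v' -> v = v'.
Proof.
  intros E. apply rho_invP in E. pose proof (proj2 (rho_invP v' _) eq_refl). congruence.
Qed.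

Lemma coef_rename C w :
  coef (rename C) w = match rho_inv w with Some v => coef C v | None => 0 end.
Proof.
  destruct C as [ts k]; unfold coef, rename; cbn [terms].
  destruct (rho_inv w) as [v|] eqn:Ew.
  - apply rho_invP in Ew as <-.
    induction ts as [|[u c] ts IH]; cbn; [reflexivity|]. rewrite IH.
    destruct (var_eq_dec (rho u) (rho v)) as [E|E], (var_eq_dec u v) as [E'|E'];
      [reflexivity | apply rho_inj in E; contradiction | subst; contradiction | reflexivity].
  - induction ts as [|[u c] ts IH]; cbn; [reflexivity|]. rewrite IH.
    destruct (var_eq_dec (rho u) w) as [E|]; [|reflexivity].
    apply rho_invP in E; congruence.
Qed.

Lemma cancellation_rename C1 C2 :
  cancellation (rename C1) (rename C2) = cancellation C1 C2.
Proof.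
  unfold cancellation.
  replace (support (rename C1) ++ support (rename C2))
    with (map rho (support C1 ++ support C2))
    by (unfold support, rename; cbn; rewrite map_app, !map_map; reflexivity).
  induction (support C1 ++ support C2) as [|v vs IH]; cbn [map nodup]; [reflexivity|].
  destruct (in_dec var_eq_dec (rho v) (map rho vs)) as [Hin|Hin],
    (in_dec var_eq_dec v vs) as [Hin'|Hin']; cbn [fold_right].
  - exact IH.
  - apply in_map_iff in Hin as [u [Eu Hu]]. apply rho_inj in Eu; subst; contradiction.
  - destruct Hin; apply in_map, Hin'.
  - rewrite IH, !coef_rename, (proj2 (rho_invP v _) eq_refl). reflexivity.
Qed.

Ltac coef_rename_pointwise H :=
  let w := fresh "w" in
  intros w; rewrite !coef_rename; destruct (rho_inv w); [apply H | first [reflexivity | ring]].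

Lemma ceq_rename C D : ceq C D -> ceq (rename C) (rename D).
Proof. intros [Hc Hd]; split; [coef_rename_pointwise Hc | exact Hd]. Qed.

Lemma cp_step_rename prem prev C :
  cp_step prem prev C -> cp_step (map rename prem) (map rename prev) (rename C).
Proof.
  intros [[P [HP HC]] | [[[v b] Hl] | [[C1 [C2 [H1 [H2 [Hc Hd]]]]] |
    [[k [C1 [H1 [Hk [Hc Hd]]]]] | [[k [C1 [H1 [Hk [Hc Hd]]]]] | [C1 [H1 [Hd0 [Hc Hd]]]]]]]]].
  - left. exists (rename P); split; [apply in_map, HP | apply ceq_rename, HC].
  - right; left. exists (rho v, b). apply ceq_rename in Hl. destruct b; exact Hl.
  - do 2 right; left. exists (rename C1), (rename C2).
    split; [apply in_map, H1|]. split; [apply in_map, H2|]. split.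
    + coef_rename_pointwise Hc.
    + fold (cancellation (rename C1) (rename C2)). rewrite cancellation_rename. exact Hd.
  - do 3 right; left. exists k, (rename C1).
    split; [apply in_map, H1 | repeat split; [exact Hk | coef_rename_pointwise Hc | exact Hd]].
  - do 4 right; left. exists k, (rename C1).
    split; [apply in_map, H1 | repeat split; [exact Hk | coef_rename_pointwise Hc | exact Hd]].
  - do 5 right. exists (rename C1).
    split; [apply in_map, H1 | repeat split; [exact Hd0 | coef_rename_pointwise Hc | exact Hd]].
Qed.

Lemma cp_valid_rename prem prev D :
  cp_valid prem prev D -> cp_valid (map rename prem) (map rename prev) (map rename D).
Proof.
  revert prev; induction D as [|C D IH]; cbn; [trivial|]. intros prev [HC HD].
  split; [apply cp_step_rename, HC|].
  change [rename C] with (map rename [C]). rewrite <- map_app. apply IH, HD.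
Qed.

Lemma derives_rename hyps D C :
  derives hyps D C -> derives (map rename hyps) (map rename D) (rename C).
Proof.
  intros [HD [Q [HQ HC]]]. split; [apply (cp_valid_rename _ [] _ HD)|].
  exists (rename Q); split; [apply in_map, HQ | apply ceq_rename, HC].
Qed.

Lemma deriv_size_rename D : deriv_size (map rename D) = deriv_size D.
Proof.
  induction D as [|[ts k] D IH]; [reflexivity|]. cbn [map deriv_size fold_right].
  fold (deriv_size (map rename D)) (deriv_size D). rewrite IH. f_equal.
  unfold pbc_size, rename; cbn. f_equal. induction ts as [|t ts IHts]; cbn; congruence.
Qed.

End Renaming.

Definition shift_var (s : nat) (v : var) : var := (fst v, (snd v + s)%nat).

Definition unshift_var (s : nat) (w : var) : option var :=
  if (snd w <? s)%nat then None else Some (fst w, (snd w - s)%nat).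

Lemma unshift_varP s v w : unshift_var s w = Some v <-> shift_var s v = w.
Proof.
  destruct v as [t i], w as [t' j]; unfold unshift_var, shift_var; cbn [fst snd].
  destruct (Nat.ltb_spec j s); split; intros E; inversion E; subst.
  - lia.
  - do 2 f_equal; lia.
  - do 2 f_equal; lia.
Qed.

Definition shift (s : nat) : pbc -> pbc := rename (shift_var s).

Definition spec_a1_fwd (u v a : nat -> var) : pbc :=
  mk [(1, neg (a 1%nat)); (1, pos (u 1%nat)); (1, neg (v 1%nat))] 1.
Definition spec_a1_bwd (u v a : nat -> var) : pbc :=
  mk [(2, pos (a 1%nat)); (1, neg (u 1%nat)); (1, pos (v 1%nat))] 2.
Definition spec_a_fwd (u v a : nat -> var) (i : nat) : pbc :=
  mk [(3, neg (a (i+1)%nat)); (2, pos (a i)); (1, pos (u (i+1)%nat));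
      (1, neg (v (i+1)%nat))] 3.
Definition spec_a_bwd (u v a : nat -> var) (i : nat) : pbc :=
  mk [(2, pos (a (i+1)%nat)); (2, neg (a i)); (1, neg (u (i+1)%nat));
      (1, pos (v (i+1)%nat))] 2.
Definition spec_d1_fwd (u v d : nat -> var) : pbc :=
  mk [(1, neg (d 1%nat)); (1, pos (v 1%nat)); (1, neg (u 1%nat))] 1.
Definition spec_d1_bwd (u v d : nat -> var) : pbc :=
  mk [(2, pos (d 1%nat)); (1, neg (v 1%nat)); (1, pos (u 1%nat))] 2.
Definition spec_d_fwd (u v a d : nat -> var) (i : nat) : pbc :=
  mk [(4, neg (d (i+1)%nat)); (3, pos (d i)); (1, neg (a i));
      (1, pos (v (i+1)%nat)); (1, neg (u (i+1)%nat))] 4.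
Definition spec_d_bwd (u v a d : nat -> var) (i : nat) : pbc :=
  mk [(4, pos (d (i+1)%nat)); (3, neg (d i)); (1, pos (a i));
      (1, neg (v (i+1)%nat)); (1, pos (u (i+1)%nat))] 3.

Lemma spec_base_incl n u v a d :
  incl [spec_a1_fwd u v a; spec_a1_bwd u v a; spec_d1_fwd u v d; spec_d1_bwd u v d]
    (spec n u v a d).
Proof. intros C; unfold spec; rewrite !in_app_iff; cbn [In]; tauto. Qed.

Lemma spec_a_incl n u v a d i : (1 <= i <= n - 2)%nat ->
  incl [spec_a_fwd u v a i; spec_a_bwd u v a i] (spec n u v a d).
Proof.
  intros Hi C HC; unfold spec; rewrite !in_app_iff, !in_flat_map.
  right; left; exists i; split; [apply in_seq; lia | exact HC].
Qed.

Lemma spec_d_incl n u v a d i : (1 <= i <= n - 1)%nat ->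
  incl [spec_d_fwd u v a d i; spec_d_bwd u v a d i] (spec n u v a d).
Proof.
  intros Hi C HC; unfold spec; rewrite !in_app_iff, !in_flat_map.
  do 3 right; exists i; split; [apply in_seq; lia | exact HC].
Qed.

Lemma in_transitivity_premises n C :
  In C (spec n vX vY vA vD) \/ In C (spec n vY vZ vB vE) \/ In C (spec n vX vZ vC vF) \/
  mk [(1, pos (vD n))] 1 = C \/ mk [(1, pos (vE n))] 1 = C ->
  In C (transitivity_premises n).
Proof. unfold transitivity_premises; rewrite !in_app_iff; cbn [In]; tauto. Qed.

Definition clause (ls : list lit) : pbc := mk (map (pair 1) ls) 1.

Definition le_trans_clause (i : nat) : pbc := clause [neg (vD i); neg (vE i); pos (vF i)].
Definition ge_xy_clause (i : nat) : pbc :=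
  clause [neg (vC i); neg (vD i); neg (vE i); pos (vA i)].
Definition ge_yz_clause (i : nat) : pbc :=
  clause [neg (vC i); neg (vD i); neg (vE i); pos (vB i)].

(* Cancels the term c*v by adding |c| copies of the axiom of the opposite literal. *)
Definition weaken (v : var) (p : cp_proof) : cp_proof :=
  let c := coef (conclusion p) v in
  if c =? 0 then p else Add p (Mul (Z.abs c) (LitAx (v, c <? 0))).

Definition drop (vs : list var) (p : cp_proof) : cp_proof := Sat (fold_right weaken p vs).

Definition resolve (p q : cp_proof) : cp_proof := Sat (Add p q).

(* The clauses extracted from the specification, writing ' for index i+1:
     a1_bwd_u : a1 \/ ~u1             a1_bwd_v : a1 \/ v1
     d1_bwd_u : d1 \/ u1              d1_bwd_v : d1 \/ ~v1
     a_fwd_prefix : ~a' \/ a          a_fwd_last : ~a' \/ u' \/ ~v'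
     a_bwd_u : a' \/ ~a \/ ~u'        a_bwd_v : a' \/ ~a \/ v'
     d_fwd_prefix : ~d' \/ d          d_fwd_last : ~d' \/ ~a \/ v' \/ ~u'
     d_bwd_a : d' \/ ~d \/ a          d_bwd_u : d' \/ ~d \/ u'
     d_bwd_v : d' \/ ~d \/ ~v' *)
Section Clauses.

Variables u v a d : nat -> var.
Variable i : nat.

Definition a1_bwd_u : cp_proof := drop [v 1%nat] (Hyp (spec_a1_bwd u v a)).
Definition a1_bwd_v : cp_proof := drop [u 1%nat] (Hyp (spec_a1_bwd u v a)).
Definition d1_bwd_u : cp_proof := drop [v 1%nat] (Hyp (spec_d1_bwd u v d)).
Definition d1_bwd_v : cp_proof := drop [u 1%nat] (Hyp (spec_d1_bwd u v d)).
Definition a_fwd_prefix : cp_proof :=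
  drop [u (i+1)%nat; v (i+1)%nat] (Hyp (spec_a_fwd u v a i)).
Definition a_fwd_last : cp_proof := drop [a i] (Hyp (spec_a_fwd u v a i)).
Definition a_bwd_u : cp_proof := drop [v (i+1)%nat] (Hyp (spec_a_bwd u v a i)).
Definition a_bwd_v : cp_proof := drop [u (i+1)%nat] (Hyp (spec_a_bwd u v a i)).
Definition d_fwd_prefix : cp_proof :=
  drop [a i; v (i+1)%nat; u (i+1)%nat] (Hyp (spec_d_fwd u v a d i)).
Definition d_fwd_last : cp_proof := drop [d i] (Hyp (spec_d_fwd u v a d i)).
Definition d_bwd_a : cp_proof :=
  drop [v (i+1)%nat; u (i+1)%nat] (Hyp (spec_d_bwd u v a d i)).
Definition d_bwd_u : cp_proof := drop [a i; v (i+1)%nat] (Hyp (spec_d_bwd u v a d i)).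
Definition d_bwd_v : cp_proof := drop [a i; u (i+1)%nat] (Hyp (spec_d_bwd u v a d i)).

End Clauses.

(** * The constant-size derivations *)

Definition base_hyps : list pbc :=
  [spec_a1_fwd vX vZ vC; spec_a1_bwd vX vY vA; spec_a1_bwd vY vZ vB;
   spec_d1_fwd vX vY vD; spec_d1_fwd vY vZ vE; spec_d1_bwd vX vZ vF].

Definition base_le_trans : cp_proof :=
  resolve (resolve (resolve (Hyp (spec_d1_fwd vX vY vD)) (Hyp (spec_d1_fwd vY vZ vE)))
             (d1_bwd_u vX vZ vF))
    (d1_bwd_v vX vZ vF).

Definition base_ge_xy : cp_proof :=
  Add (resolve (resolve (resolve (Hyp (spec_a1_fwd vX vZ vC)) (a1_bwd_u vX vY vA))
                  (Hyp (spec_d1_fwd vY vZ vE)))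
         (a1_bwd_v vX vY vA))
    (LitAx (neg (vD 1))).

Definition base_ge_yz : cp_proof :=
  Add (resolve (resolve (resolve (Hyp (spec_a1_fwd vX vZ vC)) (Hyp (spec_d1_fwd vX vY vD)))
                  (a1_bwd_u vY vZ vB))
         (a1_bwd_v vY vZ vB))
    (LitAx (neg (vE 1))).

Definition step_hyps (i : nat) : list pbc :=
  [spec_d_fwd vX vY vA vD i; spec_d_fwd vY vZ vB vE i; spec_d_bwd vX vZ vC vF i;
   le_trans_clause i; ge_xy_clause i; ge_yz_clause i].

Definition step_ge_hyps (i : nat) : list pbc :=
  [spec_a_fwd vX vZ vC i; spec_a_bwd vX vY vA i; spec_a_bwd vY vZ vB i;
   spec_d_fwd vX vY vA vD i; spec_d_fwd vY vZ vB vE i; ge_xy_clause i; ge_yz_clause i].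

Definition lift_de (p : cp_proof) : cp_proof :=
  resolve (resolve p (d_fwd_prefix vX vY vA vD 1)) (d_fwd_prefix vY vZ vB vE 1).

Definition lift_c (p : cp_proof) : cp_proof := resolve p (a_fwd_prefix vX vZ vC 1).

Definition step_le_trans : cp_proof :=
  let f1 := lift_de (Hyp (le_trans_clause 1)) in
  let x2_le_z2 :=
    resolve (resolve (lift_de (Hyp (ge_xy_clause 1))) (d_fwd_last vX vY vA vD 1))
      (resolve (lift_de (Hyp (ge_yz_clause 1))) (d_fwd_last vY vZ vB vE 1)) in
  let f2_or_x2_le_z2 := resolve x2_le_z2 (resolve f1 (d_bwd_a vX vZ vC vF 1)) in
  resolve (resolve f2_or_x2_le_z2 (resolve f1 (d_bwd_u vX vZ vC vF 1)))
    (resolve f1 (d_bwd_v vX vZ vC vF 1)).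

Definition step_ge_xy : cp_proof :=
  let a1 := lift_c (lift_de (Hyp (ge_xy_clause 1))) in
  let b1 := lift_c (lift_de (Hyp (ge_yz_clause 1))) in
  let y2_le_x2 := resolve (resolve b1 (d_fwd_last vY vZ vB vE 1)) (a_fwd_last vX vZ vC 1) in
  resolve (resolve (resolve a1 (a_bwd_u vX vY vA 1)) y2_le_x2)
    (resolve a1 (a_bwd_v vX vY vA 1)).

Definition step_ge_yz : cp_proof :=
  let a1 := lift_c (lift_de (Hyp (ge_xy_clause 1))) in
  let b1 := lift_c (lift_de (Hyp (ge_yz_clause 1))) in
  let z2_le_y2 := resolve (resolve a1 (d_fwd_last vX vY vA vD 1)) (a_fwd_last vX vZ vC 1) in
  resolve (resolve (resolve b1 (a_bwd_v vY vZ vB 1)) z2_le_y2)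
    (resolve b1 (a_bwd_u vY vZ vB 1)).

Definition final_hyps (i : nat) : list pbc :=
  [le_trans_clause i; mk [(1, pos (vD i))] 1; mk [(1, pos (vE i))] 1].

Definition final_proof : cp_proof :=
  Add (Add (Hyp (le_trans_clause 1)) (Hyp (mk [(1, pos (vD 1))] 1)))
    (Hyp (mk [(1, pos (vE 1))] 1)).

Lemma base_le_trans_proves : proves base_hyps base_le_trans (le_trans_clause 1) = true.
Proof. vm_compute; reflexivity. Qed.

Lemma base_ge_xy_proves : proves base_hyps base_ge_xy (ge_xy_clause 1) = true.
Proof. vm_compute; reflexivity. Qed.

Lemma base_ge_yz_proves : proves base_hyps base_ge_yz (ge_yz_clause 1) = true.
Proof. vm_compute; reflexivity. Qed.

Lemma step_le_trans_proves : proves (step_hyps 1) step_le_trans (le_trans_clause 2) = true.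
Proof. vm_compute; reflexivity. Qed.

Lemma step_ge_xy_proves : proves (step_ge_hyps 1) step_ge_xy (ge_xy_clause 2) = true.
Proof. vm_compute; reflexivity. Qed.

Lemma step_ge_yz_proves : proves (step_ge_hyps 1) step_ge_yz (ge_yz_clause 2) = true.
Proof. vm_compute; reflexivity. Qed.

Lemma final_proof_proves : proves (final_hyps 1) final_proof (transitivity_goal 1) = true.
Proof. vm_compute; reflexivity. Qed.

Lemma shift_step_hyps s i : map (shift s) (step_hyps i) = step_hyps (i + s).
Proof. cbv -[Nat.add]; rewrite !Nat.add_1_r; reflexivity. Qed.

Lemma shift_step_ge_hyps s i : map (shift s) (step_ge_hyps i) = step_ge_hyps (i + s).
Proof. cbv -[Nat.add]; rewrite !Nat.add_1_r; reflexivity. Qed.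

Lemma shift_final_hyps s i : map (shift s) (final_hyps i) = final_hyps (i + s).
Proof. reflexivity. Qed.

Lemma proves_block prem P hyps p C :
  proves hyps p C = true -> (forall H, In H hyps -> available prem P H) ->
  cp_valid prem P (linearize p) /\ available prem (P ++ linearize p) C.
Proof. intros Hp Hh; apply (derives_cut hyps); [exact Hh | apply proves_derives, Hp]. Qed.

Lemma proves_shifted_block prem P hyps p C s :
  proves hyps p C = true -> (forall H, In H (map (shift s) hyps) -> available prem P H) ->
  cp_valid prem P (map (shift s) (linearize p)) /\
  available prem (P ++ map (shift s) (linearize p)) (shift s C).
Proof.
  intros Hp Hh; apply (derives_cut (map (shift s) hyps)); [exact Hh|].
  apply (derives_rename _ _ (unshift_varP s)), proves_derives, Hp.
Qed.

Definition level_invariant (n i : nat) (P : list pbc) : Prop :=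
  available (transitivity_premises n) P (le_trans_clause i) /\
  ((i < n)%nat -> available (transitivity_premises n) P (ge_xy_clause i) /\
                  available (transitivity_premises n) P (ge_yz_clause i)).

Definition base_derivation : list pbc :=
  linearize base_le_trans ++ linearize base_ge_xy ++ linearize base_ge_yz.

Definition step_derivation (n s : nat) : list pbc :=
  map (shift s) (linearize step_le_trans) ++
  if (s + 2 <? n)%nat
  then map (shift s) (linearize step_ge_xy) ++ map (shift s) (linearize step_ge_yz)
  else [].

Definition final_derivation (n : nat) : list pbc :=
  map (shift (n - 1)) (linearize final_proof).

Definition transitivity_derivation (n : nat) : list pbc :=
  base_derivation ++ flat_map (step_derivation n) (seq 0 (n - 1)) ++ final_derivation n.

Ltac in_spec :=
  first [ solve [apply spec_base_incl; cbn [In]; tauto]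
        | solve [eapply spec_a_incl; [| cbn [In]; eauto]; lia]
        | solve [eapply spec_d_incl; [| cbn [In]; eauto]; lia] ].

Ltac in_premises :=
  apply in_transitivity_premises;
  first [left; in_spec | right; left; in_spec | do 2 right; left; in_spec].

Ltac forall_in_list := apply Forall_forall; repeat apply Forall_cons; try apply Forall_nil.

Ltac incl_app := let x := fresh in intros x; rewrite ?in_app_iff; cbn [In]; tauto.

Lemma base_derivation_valid n :
  cp_valid (transitivity_premises n) [] base_derivation /\
  level_invariant n 1 base_derivation.
Proof.
  assert (Hh : forall P H, In H base_hyps -> available (transitivity_premises n) P H).
  { intros P; forall_in_list; apply available_of_In, in_or_app; left; in_premises. }
  destruct (proves_block _ [] _ _ _ base_le_trans_proves (Hh _)) as [V1 A1].
  destruct (proves_block _ _ _ _ _ base_ge_xy_proves (Hh ([] ++ linearize base_le_trans)))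
    as [V2 A2].
  destruct (proves_block _ _ _ _ _ base_ge_yz_proves
    (Hh (([] ++ linearize base_le_trans) ++ linearize base_ge_xy))) as [V3 A3].
  unfold base_derivation; split.
  - apply cp_valid_app; [exact V1|]. apply cp_valid_app; [exact V2 | exact V3].
  - split; [|intros _; split]; [revert A1 | revert A2 | revert A3];
      apply available_incl; incl_app.
Qed.

Lemma step_hyps_available n s P : (s + 2 <= n)%nat -> level_invariant n (S s) P ->
  forall H, In H (map (shift s) (step_hyps 1)) -> available (transitivity_premises n) P H.
Proof.
  intros Hs [HI HJ]; destruct (HJ ltac:(lia)).
  rewrite shift_step_hyps; forall_in_list; try assumption.
  all: apply available_of_In, in_or_app; left; in_premises.
Qed.

Lemma step_ge_hyps_available n s P : (s + 3 <= n)%nat ->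
  available (transitivity_premises n) P (ge_xy_clause (S s)) ->
  available (transitivity_premises n) P (ge_yz_clause (S s)) ->
  forall H, In H (map (shift s) (step_ge_hyps 1)) -> available (transitivity_premises n) P H.
Proof.
  intros Hs HJa HJb.
  rewrite shift_step_ge_hyps; forall_in_list; try assumption.
  all: apply available_of_In, in_or_app; left; in_premises.
Qed.

Lemma step_derivation_valid n s P : (s + 2 <= n)%nat -> level_invariant n (S s) P ->
  cp_valid (transitivity_premises n) P (step_derivation n s) /\
  level_invariant n (S (S s)) (P ++ step_derivation n s).
Proof.
  intros Hs Hinv; unfold step_derivation.
  destruct (proves_shifted_block _ _ _ _ _ s step_le_trans_proves
              (step_hyps_available n s P Hs Hinv)) as [V1 A1].
  set (D1 := map (shift s) (linearize step_le_trans)) in *; clearbody D1.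
  destruct (Nat.ltb_spec (s + 2) n) as [Hlt|Hlast].
  - destruct Hinv as [_ HJ]; destruct (HJ ltac:(lia)) as [HJa HJb].
    assert (Hhyps : forall Q, incl P Q -> forall H, In H (map (shift s) (step_ge_hyps 1)) ->
                      available (transitivity_premises n) Q H)
      by (intros Q HQ; apply step_ge_hyps_available; [lia | revert HJa | revert HJb];
          apply available_incl, HQ).
    destruct (proves_shifted_block _ _ _ _ _ s step_ge_xy_proves
                (Hhyps (P ++ D1) ltac:(incl_app))) as [V2 A2].
    set (D2 := map (shift s) (linearize step_ge_xy)) in *; clearbody D2.
    destruct (proves_shifted_block _ _ _ _ _ s step_ge_yz_proves
                (Hhyps (P ++ D1 ++ D2) ltac:(incl_app))) as [V3 A3].
    set (D3 := map (shift s) (linearize step_ge_yz)) in *; clearbody D3.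
    split.
    + apply cp_valid_app; [exact V1|]. apply cp_valid_app; [exact V2|].
      rewrite <- app_assoc; exact V3.
    + split; [|intros _; split]; [revert A1 | revert A2 | revert A3];
        apply available_incl; incl_app.
  - rewrite app_nil_r. split; [exact V1|]. split; [exact A1 | lia].
Qed.

Lemma prefix_derivation_valid n k : (k + 1 <= n)%nat ->
  cp_valid (transitivity_premises n) []
    (base_derivation ++ flat_map (step_derivation n) (seq 0 k)) /\
  level_invariant n (S k) (base_derivation ++ flat_map (step_derivation n) (seq 0 k)).
Proof.
  induction k as [|k IH]; intros Hk.
  - rewrite app_nil_r; apply base_derivation_valid.
  - destruct (IH ltac:(lia)) as [V Inv].
    destruct (step_derivation_valid n k _ ltac:(lia) Inv) as [V' Inv'].
    rewrite seq_S, flat_map_app, app_assoc; cbn [flat_map]; rewrite app_nil_r.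
    split; [apply cp_valid_app|]; assumption.
Qed.

Lemma final_derivation_valid n P : (1 <= n)%nat -> level_invariant n n P ->
  cp_valid (transitivity_premises n) P (final_derivation n).
Proof.
  intros Hn [HI _].
  apply (proves_shifted_block _ _ _ _ _ (n - 1) final_proof_proves).
  rewrite shift_final_hyps; replace (1 + (n - 1))%nat with n by lia.
  forall_in_list; [exact HI | |]; apply available_of_In, in_or_app; left;
    apply in_transitivity_premises; tauto.
Qed.

Lemma final_derivation_last n : (1 <= n)%nat ->
  exists D C, final_derivation n = D ++ [C] /\ ceq C (transitivity_goal n).
Proof.
  intros Hn. destruct (linearize_last final_proof) as [D HD].
  exists (map (shift (n - 1)) D), (shift (n - 1) (conclusion final_proof)). split.
  - unfold final_derivation; rewrite HD, map_app; reflexivity.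
  - replace (transitivity_goal n) with (shift (n - 1) (transitivity_goal 1))
      by (cbv -[Nat.sub]; replace (S (n - 1)) with n by lia; reflexivity).
    apply (ceq_rename _ _ (unshift_varP _)), (proves_conclusion (final_hyps 1)).
    exact final_proof_proves.
Qed.

Lemma deriv_size_app D1 D2 : deriv_size (D1 ++ D2) = deriv_size D1 + deriv_size D2.
Proof. unfold deriv_size; induction D1 as [|C D1 IH]; cbn [app fold_right]; lia. Qed.

Lemma pbc_size_nonneg C : 0 <= pbc_size C.
Proof.
  assert (Hz : forall z, 0 <= zsize z)
    by (intros z; unfold zsize; pose proof (Z.log2_nonneg (Z.abs z + 1)); lia).
  destruct C as [ts k]; unfold pbc_size; cbn [terms degree]. pose proof (Hz k).
  induction ts as [|t ts IH]; cbn [fold_right]; [lia|]. pose proof (Hz (snd t)); lia.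
Qed.

Lemma deriv_size_nonneg D : 0 <= deriv_size D.
Proof.
  unfold deriv_size; induction D as [|C D IH]; cbn [fold_right]; [lia|].
  pose proof (pbc_size_nonneg C); lia.
Qed.

Lemma deriv_size_flat_map_le {A} (f : A -> list pbc) (c : Z) (l : list A) :
  (forall x, deriv_size (f x) <= c) -> deriv_size (flat_map f l) <= Z.of_nat (length l) * c.
Proof.
  intros Hf; induction l as [|x l IH]; cbn [flat_map length]; [cbn; lia|].
  rewrite deriv_size_app, Nat2Z.inj_succ. specialize (Hf x). lia.
Qed.

Lemma deriv_size_shift s D : deriv_size (map (shift s) D) = deriv_size D.
Proof. apply deriv_size_rename. Qed.

Definition step_size : Z :=
  deriv_size (linearize step_le_trans) + deriv_size (linearize step_ge_xy) +
  deriv_size (linearize step_ge_yz).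

Definition transitivity_size_constant : Z :=
  deriv_size base_derivation + step_size + deriv_size (linearize final_proof).

Lemma step_derivation_size n s : deriv_size (step_derivation n s) <= step_size.
Proof.
  unfold step_derivation, step_size; rewrite !deriv_size_app, deriv_size_shift.
  pose proof (deriv_size_nonneg (linearize step_ge_xy)).
  pose proof (deriv_size_nonneg (linearize step_ge_yz)).
  destruct (s + 2 <? n)%nat.
  - rewrite deriv_size_app, !deriv_size_shift; lia.
  - change (deriv_size []) with 0; lia.
Qed.

Lemma transitivity_derivation_size n : (1 <= n)%nat ->
  deriv_size (transitivity_derivation n) <= transitivity_size_constant * Z.of_nat n.
Proof.
  intros Hn.
  pose proof (deriv_size_flat_map_le _ _ (seq 0 (n - 1)) (step_derivation_size n)) as Hsteps.
  rewrite length_seq, Nat2Z.inj_sub in Hsteps by lia.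
  assert (0 <= step_size).
  { unfold step_size. pose proof (deriv_size_nonneg (linearize step_le_trans)).
    pose proof (deriv_size_nonneg (linearize step_ge_xy)).
    pose proof (deriv_size_nonneg (linearize step_ge_yz)). lia. }
  pose proof (deriv_size_nonneg base_derivation).
  pose proof (deriv_size_nonneg (linearize final_proof)).
  unfold transitivity_derivation, final_derivation, transitivity_size_constant.
  rewrite !deriv_size_app, deriv_size_shift. nia.
Qed.

Theorem lemma14 :
  exists K : Z, forall n : nat, (1 <= n)%nat ->
    exists D : list pbc,
      cp_derivation (transitivity_premises n) (transitivity_goal n) D /\
      deriv_size D <= K * Z.of_nat n.
Proof.
  exists transitivity_size_constant; intros n Hn.
  exists (transitivity_derivation n); split; [split|].
  - destruct (prefix_derivation_valid n (n - 1) ltac:(lia)) as [V Inv].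
    replace (S (n - 1)) with n in Inv by lia.
    unfold transitivity_derivation; rewrite app_assoc.
    apply cp_valid_app; [exact V | apply final_derivation_valid; assumption].
  - destruct (final_derivation_last n Hn) as [D [C [HD HC]]].
    exists (base_derivation ++ flat_map (step_derivation n) (seq 0 (n - 1)) ++ D), C.
    split; [unfold transitivity_derivation; rewrite HD, !app_assoc; reflexivity | exact HC].
  - apply transitivity_derivation_size, Hn.
Qed.
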